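(* Elements $g,h\in B_3$ are conjugate in $B_3$ if and only if $\phi(g)$ and $\phi(h)$ are conjugate in $\mathrm{SL}_2(\mathbb{Z})$ and $\epsilon(g)=\epsilon(h)$.
   Context: $B_3=\langle\sigma_1,\sigma_2:\sigma_1\sigma_2\sigma_1=\sigma_2\sigma_1\sigma_2\rangle$ is the braid group on three strands. The homomorphism $\phi:B_3\to\mathrm{SL}_2(\mathbb{Z})$ is defined by $\phi(\sigma_1)=\begin{bmatrix}1&1\\0&1\end{bmatrix}$ and $\phi(\sigma_2)=\begin{bmatrix}1&0\\-1&1\end{bmatrix}$. The map $\epsilon:B_3\to\mathbb{Z}$ is the abelianization homomorphism with $\epsilon(\sigma_1)=\epsilon(\sigma_2)=1$ (the exponent sum). *)

(* B_3 given by its presentation: words in sigma_1^{+-1},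
   sigma_2^{+-1} modulo the congruence generated by free cancellation and the
   braid relation sigma1 sigma2 sigma1 = sigma2 sigma1 sigma2. *)
From mathcomp Require Import all_boot all_order all_algebra.
Set Implicit Arguments. Unset Strict Implicit. Unset Printing Implicit Defensive.
Import GRing.Theory Num.Theory.
Local Open Scope ring_scope.

(* a letter: (generator, sign); generator false = sigma_1, true = sigma_2;
   sign true = positive exponent, false = inverse *)
Definition letter := (bool * bool)%type.
Definition word := seq letter.

Definition s1 : letter := (false, true).
Definition s2 : letter := (true, true).
Definition letter_inv (l : letter) : letter := (l.1, ~~ l.2).
Definition word_inv (w : word) : word := rev (map letter_inv w).

Inductive braid_rel : word -> word -> Prop :=
  | rel_cancel l : braid_rel [:: l; letter_inv l] [::]
  | rel_braid : braid_rel [:: s1; s2; s1] [:: s2; s1; s2].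

Inductive braid_eq : word -> word -> Prop :=
  | beq_refl w : braid_eq w w
  | beq_sym u v : braid_eq u v -> braid_eq v u
  | beq_trans u v w : braid_eq u v -> braid_eq v w -> braid_eq u w
  | beq_ctx a b x y : braid_rel x y -> braid_eq (a ++ x ++ b) (a ++ y ++ b).

Definition braid_conj (g h : word) : Prop :=
  exists w : word, braid_eq (w ++ g ++ word_inv w) h.

Definition mx2 (a b c d : int) : 'M[int]_2 :=
  \matrix_(i < 2, j < 2)
    if (i == 0 :> nat) then (if (j == 0 :> nat) then a else b)
    else (if (j == 0 :> nat) then c else d).

Definition phi_letter (l : letter) : 'M[int]_2 :=
  match l with
  | (false, true) => mx2 1 1 0 1
  | (false, false) => mx2 1 (-1) 0 1
  | (true, true) => mx2 1 0 (-1) 1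
  | (true, false) => mx2 1 0 1 1
  end.

Definition phi (w : word) : 'M[int]_2 := foldr (fun l M => phi_letter l *m M) 1%:M w.

Definition eps (w : word) : int := \sum_(l <- w) (if l.2 then 1 else -1).

Definition SL2Z_conj (A B : 'M[int]_2) : Prop :=
  exists P : 'M[int]_2, \det P = 1 /\ P *m A = B *m P.

(* The map w |-> (phi w, eps w) is injective on B_3 and phi is onto SL_2(Z);
   the theorem follows by realising the conjugating matrix as phi of a braid.
   Injectivity: with Delta = s1 s2 s1, every braid is Delta^m U where U is a
   word in {s1, s2^-1} or in {s1^-1, s2}.  Such words are determined by their
   images, which have positive diagonal and off-diagonal entries of one sign;
   phi Delta = [0 1; -1 0] has order 4 and no nontrivial power of it maps one
   such matrix to another, so phi determines U and m mod 4, and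
   eps (Delta^m U) = 3m + eps U then determines m.
   Surjectivity is Euclid's algorithm on the lower-left entry. *)

From mathcomp Require Import all_boot all_order all_algebra.
From mathcomp Require Import zify.
From Stdlib Require Import Setoid Morphisms.
Import GRing.Theory Num.Theory.
Local Open Scope ring_scope.

#[local] Hint Resolve beq_refl : core.

#[local] Instance braid_eq_Equivalence : Equivalence braid_eq.
Proof. split; [exact: beq_refl | exact: beq_sym | exact: beq_trans]. Qed.

Lemma braid_eq_ctx a b {u v} : braid_eq u v -> braid_eq (a ++ u ++ b) (a ++ v ++ b).
Proof.
elim=> [//|u' v' _ IH|u' v' w _ IH1 _ IH2|a' b' x y r].
- by symmetry.
- by transitivity (a ++ v' ++ b).
- by have := beq_ctx (a ++ a') (b' ++ b) r; rewrite -!catA.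
Qed.

#[local] Instance cat_braid_eq_Proper : Proper (braid_eq ==> braid_eq ==> braid_eq) cat.
Proof.
move=> u u' Hu v v' Hv; transitivity (u' ++ v).
- by have := braid_eq_ctx [::] v Hu.
- by have := braid_eq_ctx u' [::] Hv; rewrite !cats0.
Qed.

#[local] Instance cons_braid_eq_Proper : Proper (eq ==> braid_eq ==> braid_eq) cons.
Proof. by move=> l _ <- v v' Hv; have := braid_eq_ctx [:: l] [::] Hv; rewrite !cats0. Qed.

Lemma letter_invK : involutive letter_inv.
Proof. by case=> g s; rewrite /letter_inv /= negbK. Qed.

Lemma word_inv_cat u v : word_inv (u ++ v) = word_inv v ++ word_inv u.
Proof. by rewrite /word_inv map_cat rev_cat. Qed.

Lemma word_invK : involutive word_inv.
Proof. by move=> w; rewrite /word_inv map_rev revK -map_comp (eq_map letter_invK) map_id. Qed.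

Lemma cat_word_inv w : braid_eq (w ++ word_inv w) [::].
Proof.
elim: w => [|l w IH] /=; first reflexivity.
have -> : l :: w ++ word_inv (l :: w) = [:: l] ++ (w ++ word_inv w) ++ [:: letter_inv l].
  by rewrite (word_inv_cat [:: l]) !catA.
by rewrite IH; exact: (beq_ctx [::] [::] (rel_cancel l)).
Qed.

Lemma cat_inv_word w : braid_eq (word_inv w ++ w) [::].
Proof. by have := cat_word_inv (word_inv w); rewrite word_invK. Qed.

#[local] Instance word_inv_braid_eq_Proper : Proper (braid_eq ==> braid_eq) word_inv.
Proof.
move=> u v Huv.
transitivity (word_inv u ++ (v ++ word_inv v)); first by rewrite cat_word_inv cats0.
by rewrite -{1}Huv catA cat_inv_word.
Qed.

Lemma intertwine_word_inv {x y A} : braid_eq (x ++ A) (A ++ y) ->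
  braid_eq (y ++ word_inv A) (word_inv A ++ x).
Proof.
move=> H; transitivity (word_inv A ++ (A ++ y) ++ word_inv A).
  by rewrite !catA cat_inv_word.
by rewrite -H -catA cat_word_inv cats0.
Qed.

Lemma intertwine_inv {x y A} : braid_eq (x ++ A) (A ++ y) ->
  braid_eq (word_inv x ++ A) (A ++ word_inv y).
Proof.
move=> H; have := @intertwine_word_inv (word_inv y) (word_inv x) (word_inv A).
by rewrite word_invK -!word_inv_cat; apply; rewrite H.
Qed.

Lemma mulmx2 a b c d a' b' c' d' :
  mx2 a b c d *m mx2 a' b' c' d' =
  mx2 (a * a' + b * c') (a * b' + b * d') (c * a' + d * c') (c * b' + d * d').
Proof.
apply/matrixP => i j; rewrite !mxE !big_ord_recl big_ord0 !mxE addr0 /=.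
by case: i => [[|[|//]] ?]; case: j => [[|[|//]] ?].
Qed.

Lemma mx2_1 : mx2 1 0 0 1 = 1%:M.
Proof.
by apply/matrixP => i j; rewrite !mxE; case: i => [[|[|//]] ?]; case: j => [[|[|//]] ?].
Qed.

Lemma mx2_eta (M : 'M[int]_2) : M = mx2 (M 0 0) (M 0 1) (M 1 0) (M 1 1).
Proof.
apply/matrixP => i j; rewrite mxE.
by case: i => [[|[|//]] ?]; case: j => [[|[|//]] ?]; congr (M _ _); apply: val_inj.
Qed.

Lemma mx2_inj a b c d a' b' c' d' :
  mx2 a b c d = mx2 a' b' c' d' -> [/\ a = a', b = b', c = c' & d = d'].
Proof.
move=> E; have e i j : mx2 a b c d i j = mx2 a' b' c' d' i j by rewrite E.
by move: (e 0 0) (e 0 1) (e 1 0) (e 1 1); rewrite !mxE.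
Qed.

Lemma det_mx2 a b c d : \det (mx2 a b c d) = a * d - b * c.
Proof.
rewrite (expand_det_row _ 0) !big_ord_recl big_ord0 /cofactor !mxE /=.
by rewrite !det_mx11 !mxE /= /bump /= expr0 expr1 mul1r mulN1r addr0 mulrN.
Qed.

Lemma phi_cons l w : phi (l :: w) = phi_letter l *m phi w.
Proof. by []. Qed.

Lemma phi_cat u v : phi (u ++ v) = phi u *m phi v.
Proof. by elim: u => [|l u IH] /=; rewrite ?mul1mx // IH mulmxA. Qed.

Lemma det_phi w : \det (phi w) = 1.
Proof.
elim: w => [|l w IH] /=; first by rewrite det1.
by rewrite det_mulmx IH mulr1; case: l => [[] []]; rewrite det_mx2.
Qed.

Lemma eps_cat u v : eps (u ++ v) = eps u + eps v.
Proof. by rewrite /eps big_cat. Qed.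

Lemma phi_braid_eq {u v} : braid_eq u v -> phi u = phi v.
Proof.
elim=> [//|u1 v1 _ ->|u1 v1 w1 _ -> _ ->|a b x y r] //.
rewrite !phi_cat; congr (_ *m (_ *m _)).
by case: r => [[[] []]|]; rewrite /= !mulmx1 !mulmx2 -?mx2_1.
Qed.

Lemma eps_braid_eq {u v} : braid_eq u v -> eps u = eps v.
Proof.
elim=> [//|u1 v1 _ ->|u1 v1 w1 _ -> _ ->|a b x y r] //.
rewrite !eps_cat; congr (_ + (_ + _)).
by case: r => [[[] []]|]; rewrite /eps !big_cons big_nil.
Qed.

Lemma mulmx_phi_word_inv w : phi w *m phi (word_inv w) = 1%:M.
Proof. by rewrite -phi_cat (phi_braid_eq (cat_word_inv w)). Qed.

Lemma mulmx_word_inv_phi w : phi (word_inv w) *m phi w = 1%:M.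
Proof. by rewrite -phi_cat (phi_braid_eq (cat_inv_word w)). Qed.

Lemma eps_word_inv w : eps (word_inv w) = - eps w.
Proof. by have := eps_braid_eq (cat_word_inv w); rewrite eps_cat [eps [::]]/eps big_nil; lia. Qed.

(** * The Garside element Delta *)

Definition Delta : word := [:: s1; s2; s1].

Definition letter_swap (l : letter) : letter := (~~ l.1, l.2).

Lemma letter_swapK : involutive letter_swap.
Proof. by case=> g s; rewrite /letter_swap /= negbK. Qed.

Lemma Delta_conj l : braid_eq (l :: Delta) (Delta ++ [:: letter_swap l]).
Proof.
have pos (g : bool) : braid_eq ([:: (g, true)] ++ Delta) (Delta ++ [:: letter_swap (g, true)]).
  case: g; first exact (beq_sym (beq_ctx [::] [:: s1] rel_braid)).
  exact (beq_ctx [:: s1] [::] rel_braid).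
by case: l => g [|]; [exact: pos | exact: intertwine_inv (pos g)].
Qed.

Lemma Delta_inv_conj l : braid_eq (l :: word_inv Delta) (word_inv Delta ++ [:: letter_swap l]).
Proof. by have := @intertwine_word_inv [:: letter_swap l] _ _ (Delta_conj _); rewrite letter_swapK. Qed.

Definition Delta_pow (m : int) : word :=
  match m with
  | Posz n => flatten (nseq n Delta)
  | Negz n => flatten (nseq n.+1 (word_inv Delta))
  end.

Lemma flatten_nseqSr (A : word) n : flatten (nseq n.+1 A) = flatten (nseq n A) ++ A.
Proof. by rewrite -flatten_rcons; congr flatten; elim: n => //= n <-. Qed.

Lemma flatten_nseq_conj A f n l :
  (forall l, braid_eq (l :: A) (A ++ [:: f l])) ->
  braid_eq (l :: flatten (nseq n A)) (flatten (nseq n A) ++ [:: iter n f l]).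
Proof.
move=> Af; elim: n l => [//|n IH] l /=.
by rewrite -cat_cons Af -catA /= IH catA -iterSr.
Qed.

Lemma Delta_pow_conj m l :
  braid_eq (l :: Delta_pow m) (Delta_pow m ++ [:: iter `|m| letter_swap l]).
Proof. case: m => n; apply: flatten_nseq_conj; [exact: Delta_conj | exact: Delta_inv_conj]. Qed.

Lemma Delta_powS m : braid_eq (Delta_pow (m + 1)) (Delta_pow m ++ Delta).
Proof.
case: m => [n|[|n]].
- by rewrite -PoszD addn1 -flatten_nseqSr.
- by rewrite (_ : Delta_pow (Negz 0) = word_inv Delta ++ [::]) // cats0 cat_inv_word.
- have -> : Negz n.+1 + 1 = Negz n by lia.
  rewrite (_ : Delta_pow (Negz n.+1) = Delta_pow (Negz n) ++ word_inv Delta).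
    by rewrite -catA cat_inv_word cats0.
  exact: flatten_nseqSr.
Qed.

Definition letter_exp (l : letter) : int := if l.2 then 1 else -1.

Lemma Delta_pow_exp l : Delta_pow (letter_exp l) = if l.2 then Delta else word_inv Delta.
Proof. by rewrite /letter_exp; case: l.2; exact: cats0. Qed.

Lemma Delta_pow_add_exp m l :
  braid_eq (Delta_pow (m + letter_exp l)) (Delta_pow m ++ Delta_pow (letter_exp l)).
Proof.
rewrite Delta_pow_exp /letter_exp; case: l.2; first exact: Delta_powS.
by rewrite -{2}(subrK 1 m) Delta_powS -catA cat_word_inv cats0.
Qed.

(** * Normal form *)

(* True exactly for s1 and s2^-1, whose images have nonnegative entries. *)
Definition nonneg_letter (l : letter) : bool := l.1 != l.2.

Definition uniform (U : word) : bool :=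
  all nonneg_letter U || all (predC nonneg_letter) U.

Lemma braid_triple l h : l.1 != h.1 -> l.2 = h.2 ->
  braid_eq [:: l; h; l] (Delta_pow (letter_exp l)).
Proof.
rewrite Delta_pow_exp; case: l h => [[] []] [[] []] //= _ _.
- exact (beq_sym (beq_ctx [::] [::] rel_braid)).
- exact (word_inv_braid_eq_Proper _ _ (beq_sym (beq_ctx [::] [::] rel_braid))).
Qed.

Lemma mixed_pair_Delta l h : nonneg_letter l != nonneg_letter h -> l != letter_inv h ->
  braid_eq [:: l; h] (Delta_pow (letter_exp l) ++ [:: letter_inv l]).
Proof.
move=> lh_kind lh_inv.
have [lh_gen lh_sign] : l.1 != h.1 /\ l.2 = h.2.
  by move: lh_kind lh_inv; case: l h => [[] []] [[] []].
transitivity ([:: l; h; l] ++ [:: letter_inv l]).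
  exact (beq_sym (beq_ctx [:: l; h] [::] (rel_cancel l))).
by rewrite braid_triple.
Qed.

Definition cons_uniform (l : letter) (U : word) : int * word :=
  match U with
  | [::] => (0, [:: l])
  | h :: U' =>
      if l == letter_inv h then (0, U')
      else if nonneg_letter l == nonneg_letter h then (0, l :: U)
      else (letter_exp l, letter_inv l :: U')
  end.

Lemma cons_uniform_braid_eq m l U :
  braid_eq (Delta_pow m ++ l :: U)
           (Delta_pow (m + (cons_uniform l U).1) ++ (cons_uniform l U).2).
Proof.
case: U => [|h U] /=; first by rewrite addr0.
case: eqP => [->|lh_inv].
  rewrite addr0 (_ : letter_inv h :: h :: U = (word_inv [:: h] ++ [:: h]) ++ U) //.
  by rewrite cat_inv_word.
case: eqP => [_|lh_kind]; first by rewrite addr0.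
rewrite Delta_pow_add_exp -catA (_ : l :: h :: U = [:: l; h] ++ U) //.
by rewrite mixed_pair_Delta; [rewrite -catA | apply/eqP | apply/eqP].
Qed.

Lemma uniform_cons_uniform l U : uniform U -> uniform (cons_uniform l U).2.
Proof.
case: U => [|h U]; first by rewrite /uniform /=; case: nonneg_letter.
rewrite /uniform /=; case: eqP => [_|_] /=; first by case/orP=> /andP[_ ->]; rewrite ?orbT.
case: eqP => [lh_kind|/eqP] /=; first by rewrite lh_kind !andbA !andbb.
by case: l h => [[] []] [[] []].
Qed.

(* A pair (m, U) stands for Delta^m U; a new letter is first moved past
   Delta^m, which swaps the two generators m times. *)
Definition nf_cons (l : letter) (p : int * word) : int * word :=
  let q := cons_uniform (iter `|p.1| letter_swap l) p.2 in (p.1 + q.1, q.2).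

Definition normal_form (w : word) : int * word := foldr nf_cons (0, [::]) w.

Lemma normal_form_braid_eq w :
  braid_eq w (Delta_pow (normal_form w).1 ++ (normal_form w).2).
Proof.
elim: w => [|l w IH] //; rewrite [normal_form _]/= {1}IH -cat_cons Delta_pow_conj -catA.
exact: cons_uniform_braid_eq.
Qed.

Lemma normal_form_uniform w : uniform (normal_form w).2.
Proof. by elim: w => [|l w IH] //; apply: uniform_cons_uniform. Qed.

Definition mirror_mx : 'M[int]_2 := mx2 1 0 0 (-1).

Lemma mirror_mx2 a b c d : mirror_mx *m mx2 a b c d *m mirror_mx = mx2 a (- b) (- c) d.
Proof. by rewrite !mulmx2; congr mx2; lia. Qed.

Lemma phi_map_letter_inv U : phi (map letter_inv U) = mirror_mx *m phi U *m mirror_mx.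
Proof.
have mirror_mxK : mirror_mx *m mirror_mx = 1%:M by rewrite mulmx2 -mx2_1.
elim: U => [|l U IH]; first by rewrite /= mulmx1 mirror_mxK.
rewrite map_cons !phi_cons IH (_ : phi_letter (letter_inv l) = mirror_mx *m phi_letter l *m mirror_mx).
  by rewrite !mulmxA -[_ *m mirror_mx *m mirror_mx]mulmxA mirror_mxK mulmx1.
by case: l => [[] []]; rewrite mirror_mx2.
Qed.

Lemma phi_nonneg_word U : all nonneg_letter U -> exists a b c d,
  phi U = mx2 a b c d /\ [/\ 0 < a, 0 < d, 0 <= b, 0 <= c & b + c = 0 -> U = [::]].
Proof.
elim: U => [_|l U IH /= /andP[l_nonneg /IH[a [b [c [d [-> [a_gt0 d_gt0 b_ge0 c_ge0 _]]]]]]]].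
  by exists 1, 0, 0, 1; rewrite mx2_1.
case: l l_nonneg => [[] []] //= _; rewrite mulmx2; do 4 eexists.
all: by split; [reflexivity | split; [lia | lia | lia | lia | move=> ?; exfalso; lia]].
Qed.

Lemma all_nonneg_map_letter_inv U :
  all nonneg_letter (map letter_inv U) = all (predC nonneg_letter) U.
Proof. by rewrite all_map; apply: eq_all; case=> [[] []]. Qed.

Lemma phi_nonpos_word U : all (predC nonneg_letter) U -> exists a b c d,
  phi U = mx2 a (- b) (- c) d /\ [/\ 0 < a, 0 < d, 0 <= b, 0 <= c & b + c = 0 -> U = [::]].
Proof.
move=> U_nonpos.
have /phi_nonneg_word[a [b [c [d [phiU [a_gt0 d_gt0 b_ge0 c_ge0 U_nil]]]]]] :
    all nonneg_letter (map letter_inv U) by rewrite all_nonneg_map_letter_inv.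
exists a, b, c, d; split; last by split=> // /U_nil /eqP; rewrite -size_eq0 size_map size_eq0 => /eqP.
by rewrite -(mapK letter_invK U) phi_map_letter_inv phiU mirror_mx2.
Qed.

Lemma phi_nonneg_word_inj U V :
  all nonneg_letter U -> all nonneg_letter V -> phi U = phi V -> U = V.
Proof.
elim: U V => [|l U IH] [|h V] //.
- move=> _ /phi_nonneg_word[a [b [c [d [-> [_ _ b_ge0 c_ge0 V_nil]]]]]].
  by rewrite /= -mx2_1 => /mx2_inj[_ b0 c0 _]; apply/esym/V_nil; lia.
- move=> /phi_nonneg_word[a [b [c [d [-> [_ _ b_ge0 c_ge0 U_nil]]]]]] _.
  by rewrite /= -mx2_1 => /mx2_inj[_ b0 c0 _]; apply/U_nil; lia.
move=> /andP[l_nonneg U_nonneg] /andP[h_nonneg V_nonneg] phi_lU_hV.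
have [a [b [c [d [phiU [a_gt0 d_gt0 b_ge0 c_ge0 _]]]]]] := phi_nonneg_word _ U_nonneg.
have [a' [b' [c' [d' [phiV [a'_gt0 d'_gt0 b'_ge0 c'_ge0 _]]]]]] := phi_nonneg_word _ V_nonneg.
(* s1 adds the second row to the first and s2^-1 the first to the second;
   positivity tells which of the two happened. *)
suff [-> phiUV] : l = h /\ phi U = phi V by rewrite (IH V).
move: phi_lU_hV; rewrite !phi_cons phiU phiV {IH phiU phiV}.
case: l h l_nonneg h_nonneg => [[] []] [[] []] //= _ _; rewrite !mulmx2 => /mx2_inj[? ? ? ?].
all: by [split; [done | congr mx2; lia] | lia].
Qed.

Definition uniform_mx2 (M : 'M[int]_2) : Prop :=
  exists a b c d, M = mx2 a b c d /\ [/\ 0 < a, 0 < d & 0 <= b * c].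

Lemma uniform_mx2_phi U : uniform U -> uniform_mx2 (phi U).
Proof.
case/orP=> [/phi_nonneg_word | /phi_nonpos_word] [a [b [c [d [-> [? ? ? ? _]]]]]].
  by exists a, b, c, d; split=> //; split=> //; nia.
by exists a, (- b), (- c), d; split=> //; split=> //; nia.
Qed.

Lemma phi_uniform_inj U V : uniform U -> uniform V -> phi U = phi V -> U = V.
Proof.
have mixed U' V' : all nonneg_letter U' -> all (predC nonneg_letter) V' ->
    phi U' = phi V' -> U' = V'.
  move=> /phi_nonneg_word[a [b [c [d [-> [_ _ b_ge0 c_ge0 U'_nil]]]]]].
  move=> /phi_nonpos_word[a' [b' [c' [d' [-> [_ _ b'_ge0 c'_ge0 V'_nil]]]]]].
  by move=> /mx2_inj[_ ? ? _]; rewrite U'_nil ?V'_nil //; lia.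
case/orP=> [U_nonneg | U_nonpos] /orP[V_nonneg | V_nonpos] phiUV.
- exact: phi_nonneg_word_inj.
- exact: mixed.
- exact/esym/mixed.
apply: (inj_map (can_inj letter_invK)); apply: phi_nonneg_word_inj.
- by rewrite all_nonneg_map_letter_inv.
- by rewrite all_nonneg_map_letter_inv.
by rewrite !phi_map_letter_inv phiUV.
Qed.

(** * Injectivity of phi and eps *)

(* The four powers of phi Delta = [0 1; -1 0]. *)
Definition Delta_image (M : 'M[int]_2) : Prop :=
  [\/ M = mx2 1 0 0 1, M = mx2 0 1 (-1) 0, M = mx2 (-1) 0 0 (-1) | M = mx2 0 (-1) 1 0].

Lemma Delta_image_phi m : Delta_image (phi (Delta_pow m)).
Proof.
have closed A n : (forall M, Delta_image M -> Delta_image (phi A *m M)) ->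
    Delta_image (phi (flatten (nseq n A))).
  move=> A_closed; elim: n => [|n IH]; first by constructor 1; rewrite mx2_1.
  by rewrite /= phi_cat; apply: A_closed.
case: m => n; apply: closed => M [] ->; rewrite /= mulmx1 !mulmx2.
all: by [constructor 1 | constructor 2 | constructor 3 | constructor 4].
Qed.

Lemma Delta_image_coset X Y M N : Delta_image X -> Delta_image Y ->
  uniform_mx2 M -> uniform_mx2 N -> X *m M = Y *m N -> M = N.
Proof.
move=> [] -> [] -> [a [b [c [d [-> [? ? ?]]]]]] [a' [b' [c' [d' [-> [? ? ?]]]]]].
all: by rewrite !mulmx2 => /mx2_inj[? ? ? ?]; first [congr mx2; lia | nia].
Qed.

Lemma eps_flatten_nseq A n : eps (flatten (nseq n A)) = n%:Z * eps A.
Proof.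
elim: n => [|n IH]; first by rewrite /eps big_nil mul0r.
by rewrite /= eps_cat IH -addn1 PoszD mulrDl mul1r addrC.
Qed.

Lemma eps_Delta_pow m : eps (Delta_pow m) = 3 * m.
Proof.
have eps_Delta : eps Delta = 3 by rewrite /eps !big_cons big_nil.
case: m => n; rewrite eps_flatten_nseq ?eps_word_inv eps_Delta ?NegzE; lia.
Qed.

Theorem braid_eq_of_phi_eps u v : phi u = phi v -> eps u = eps v -> braid_eq u v.
Proof.
have := normal_form_braid_eq u; have := normal_form_braid_eq v.
have := normal_form_uniform u; have := normal_form_uniform v.
case: (normal_form u) (normal_form v) => [m U] [n V] /= V_unif U_unif nf_v nf_u.
rewrite (phi_braid_eq nf_u) (phi_braid_eq nf_v) (eps_braid_eq nf_u) (eps_braid_eq nf_v).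
rewrite !phi_cat !eps_cat !eps_Delta_pow => phi_eq eps_eq.
have UV : U = V.
  apply: phi_uniform_inj => //; apply: Delta_image_coset phi_eq;
  by [apply: Delta_image_phi | apply: uniform_mx2_phi].
have mn : m = n by move: eps_eq; rewrite UV; lia.
by rewrite nf_u nf_v UV mn.
Qed.

(** * Surjectivity of phi *)

Definition sigma1_pow (k : int) : word :=
  if k is Negz n then nseq n.+1 (letter_inv s1) else nseq `|k| s1.

Lemma phi_sigma1_pow k : phi (sigma1_pow k) = mx2 1 k 0 1.
Proof.
have phi_nseq l (e : int) n :
    phi_letter l = mx2 1 e 0 1 -> phi (nseq n l) = mx2 1 (n%:Z * e) 0 1.
  move=> phi_l; elim: n => [|n IH]; first by rewrite mul0r mx2_1.
  by rewrite phi_cons IH phi_l mulmx2; congr mx2; lia.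
case: k => n; first by rewrite (phi_nseq _ 1) // mulr1.
by rewrite (phi_nseq _ (-1)) // NegzE mulrN1.
Qed.

Lemma mulz_eq1 (a d : int) : a * d = 1 -> (a = 1 /\ d = 1) \/ (a = -1 /\ d = -1).
Proof.
by move=> /[dup] ad1 /intUnitRing.unitzPl; rewrite qualifE /= => /orP[] /eqP d1; subst d; lia.
Qed.

Lemma phi_surjective_upper a b d : a * d = 1 -> exists w, phi w = mx2 a b 0 d.
Proof.
case/mulz_eq1=> [[-> ->] | [-> ->]]; first by exists (sigma1_pow b); rewrite phi_sigma1_pow.
exists (Delta ++ Delta ++ sigma1_pow (- b)).
by rewrite !phi_cat phi_sigma1_pow /= mulmx1 !mulmx2; congr mx2; lia.
Qed.

Lemma phi_surjective_mx2 a b c d : a * d - b * c = 1 -> exists w, phi w = mx2 a b c d.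
Proof.
move: {2}`|c|%N (leqnn `|c|%N) => n; elim: n a b c d => [|n IH] a b c d c_small det1.
  have c0 : c = 0 by lia.
  by rewrite c0; apply: phi_surjective_upper; rewrite c0 in det1; lia.
have [c0 | c_neq0] := eqVneq c 0; first by apply: IH => //; rewrite c0.
pose k := (a %/ c)%Z; pose r := (a %% c)%Z.
have a_eq : a = k * c + r := divz_eq a c.
have r_ge0 : 0 <= r := modz_ge0 a c_neq0.
have r_lt : r < `|c| := ltz_mod a c_neq0.
(* [a b; c d] = [1 k; 0 1] [0 -1; 1 0] [c d; -r (k d - b)] *)
have [w phi_w] := IH c d (- r) (k * d - b) ltac:(lia) ltac:(nia).
exists (sigma1_pow k ++ word_inv Delta ++ w).
by rewrite !phi_cat phi_sigma1_pow phi_w /= mulmx1 !mulmx2; congr mx2; nia.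
Qed.

Lemma phi_surjective (M : 'M[int]_2) : \det M = 1 -> exists w, phi w = M.
Proof. by rewrite [M]mx2_eta det_mx2; apply: phi_surjective_mx2. Qed.

Lemma phi_conj w g : phi (w ++ g ++ word_inv w) *m phi w = phi w *m phi g.
Proof. by rewrite !phi_cat -!mulmxA mulmx_word_inv_phi mulmx1. Qed.

Lemma eps_conj w g : eps (w ++ g ++ word_inv w) = eps g.
Proof. by rewrite !eps_cat eps_word_inv addrCA subrr addr0. Qed.

Theorem proposition2p5 (g h : word) :
  braid_conj g h <-> (SL2Z_conj (phi g) (phi h) /\ eps g = eps h).
Proof.
split=> [[w /[dup] /phi_braid_eq <- /eps_braid_eq <-] | [[P [detP PgP]] eps_gh]].
  by split; [exists (phi w); rewrite det_phi phi_conj | rewrite eps_conj].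
have [w phi_w] := phi_surjective _ detP; exists w.
apply: braid_eq_of_phi_eps; last by rewrite eps_conj.
rewrite -[LHS]mulmx1 -(mulmx_phi_word_inv w) mulmxA phi_conj phi_w PgP -phi_w.
by rewrite -mulmxA mulmx_phi_word_inv mulmx1.
Qed.
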